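(* In the public bug bounty model described in the context, let $\kappa_a(\overline v)$ be the largest fixed point in $[0,\infty)$ of $\hat\kappa\mapsto\overline v\,\frac{1-e^{-\hat\kappa}}{\underline c}$. Then $\kappa_a(\overline v)$ is increasing in $\overline v$ and $K(\overline v)=[0,\kappa_a(\overline v)]$, where $$K(\overline v)=\Big\{\hat\kappa:\ \hat\kappa=\Psi_\infty(\hat\kappa;\boldsymbol v,v_a,q_a),\ \sum_lv^l+v_a\le\overline v,\ v^l\ge0,\ v_a\ge0,\ q_a\in[0,1]\Big\}$$ and $\Psi_\infty(\hat\kappa;\boldsymbol v,v_a,q_a)=\sum_lv^l\mu^l\frac{1-e^{-q^l\hat\kappa}}{\underline c}+v_a\frac{1-e^{-q_a\hat\kappa}}{\underline c}$.
   Context: There are $L$ potential organic bugs; bug $l$ exists with probability $\mu^l\in(0,1]$ and has complexity $q^l\in(0,1]$. $\underline c>0$ is the lower end of the support of the agents' cost distribution. The designer has budget $\overline v>0$ with $\overline v\ge\underline c$, sets prizes $v^l\ge0$ for organic bugs, and one artificial bug with prize $v_a\ge0$ and complexity $q_a\in[0,1]$. *)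

From HB Require Import structures.
From mathcomp Require Import all_boot all_order all_algebra.
From mathcomp Require Import all_classical all_reals all_analysis.
Set Implicit Arguments. Unset Strict Implicit. Unset Printing Implicit Defensive.
Import Order.TTheory GRing.Theory Num.Theory.
Local Open Scope ring_scope.
Local Open Scope classical_set_scope.

Definition Psi_inf (R : realType) (L : nat) (mu q : 'I_L -> R) (c : R)
  (v : 'I_L -> R) (va qa k : R) : R :=
  \sum_(l < L) v l * mu l * (1 - expR (- (q l * k))) / c
  + va * (1 - expR (- (qa * k))) / c.

Definition Kset (R : realType) (L : nat) (mu q : 'I_L -> R) (c vbar : R)
  : set R :=
  [set k | 0 <= k /\
     exists (v : 'I_L -> R) (va qa : R),
       [/\ (forall l, 0 <= v l), 0 <= va, 0 <= qa <= 1,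
           \sum_(l < L) v l + va <= vbar
         & k = Psi_inf mu q c v va qa k]].

Definition fa (R : realType) (c vbar k : R) : R := vbar * (1 - expR (- k)) / c.

Definition is_largest_fp (R : realType) (c vbar k : R) : Prop :=
  [/\ 0 <= k, k = fa c vbar k
    & forall k', 0 <= k' -> k' = fa c vbar k' -> k' <= k].

From HB Require Import structures.
From mathcomp Require Import all_boot all_order all_algebra.
From mathcomp Require Import all_classical all_reals all_analysis.
From mathcomp Require Import ring lra.
Set Implicit Arguments.
Unset Strict Implicit.
Unset Printing Implicit Defensive.
Import Order.TTheory GRing.Theory Num.Theory.
Import numFieldNormedType.Exports.
Local Open Scope ring_scope.
Local Open Scope classical_set_scope.

(* Everything rests on the concavity of [k |-> 1 - e^{-k}], which vanishes at
   0 and is bounded by 1.  Boundedness and the intermediate value theorem give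
   a fixed point of [fa] above every point where [fa] exceeds the identity, so
   the largest fixed point dominates every [k >= 0] with [k <= fa k].  Since
   [mu^l <= 1] and [q^l, q_a <= 1], any feasible [Psi_inf] lies below [fa], so
   fixed points of [Psi_inf] are below [kappa_a].  Conversely concavity gives
   [k <= fa k] on [[0, kappa_a]], and such a [k] is the fixed point of the
   schedule putting the prize [c k / (1 - e^{-k}) <= vbar] on an artificial bug
   of complexity 1.  Raising the budget pushes [fa] strictly above the
   identity at [kappa_a] (or near 0, when [kappa_a = 0] and [vbar > c]), which
   creates a larger fixed point. *)

Section OneMinusExpRN.
Variable R : realType.

Lemma onemexpRN_ge0 (k : R) : 0 <= k -> 0 <= 1 - expR (- k).
Proof. by move=> k0; rewrite subr_ge0 expR_le1 oppr_le0. Qed.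

Lemma onemexpRN_gt0 (k : R) : 0 < k -> 0 < 1 - expR (- k).
Proof. by move=> k0; rewrite subr_gt0 expR_lt1 oppr_lt0. Qed.

Lemma onemexpRN_le1 (k : R) : 1 - expR (- k) <= 1.
Proof. by rewrite lerBlDr lerDl expR_ge0. Qed.

Lemma onemexpRN_le (a b : R) : a <= b -> 1 - expR (- a) <= 1 - expR (- b).
Proof. by move=> ab; rewrite lerD2l lerN2 ler_expR lerN2. Qed.

Lemma onemexpRN_concave (t a : R) : 0 <= t <= 1 ->
  t * (1 - expR (- a)) <= 1 - expR (- (t * a)).
Proof.
move=> /andP[t0 t1].
have := @convex_expR R (Itv01 t0 t1) (- a) 0.
rewrite !convRE /= expR0 mulr0 addr0 mulr1 /unstable.onem mulrN; lra.
Qed.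

Lemma onemexpRN_ge_ratio (a : R) : 0 <= a -> a / (1 + a) <= 1 - expR (- a).
Proof.
move=> a0; have a1 : 0 < 1 + a by lra.
rewrite ler_pdivrMr // expRN mulrBl mul1r.
have : (1 + a) / expR a <= 1 by rewrite ler_pdivrMr ?expR_gt0 // mul1r expR_ge1Dx.
by rewrite mulrC; lra.
Qed.

End OneMinusExpRN.

Section LargestFixedPoint.
Variables (R : realType) (c : R).
Hypothesis c_gt0 : 0 < c.

Lemma fa_continuous (vbar : R) : continuous (fa c vbar).
Proof.
move=> x; rewrite /fa.
apply: cvgM; last exact: cvg_cst.
apply: cvgM; first exact: cvg_cst.
apply: cvgB; first exact: cvg_cst.
apply: (continuous_comp (f := -%R)); last exact: continuous_expR.
exact: cvgN (cvg_id).
Qed.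

Lemma fa_le_ratio (vbar k : R) : 0 <= vbar -> fa c vbar k <= vbar / c.
Proof.
move=> v0; rewrite /fa mulrAC ler_piMr ?onemexpRN_le1 //.
by rewrite divr_ge0 // ltW.
Qed.

Lemma fa_chord (vbar t a : R) : 0 <= vbar -> 0 <= t <= 1 ->
  t * fa c vbar a <= fa c vbar (t * a).
Proof.
move=> v0 t01; rewrite /fa -!mulrA mulrCA.
apply: (ler_wpM2l v0); rewrite mulrA; apply: ler_wpM2r; first by rewrite invr_ge0 ltW.
exact: onemexpRN_concave.
Qed.

Lemma fa_ltr_budget (v1 v2 k : R) : 0 < k -> v1 < v2 -> fa c v1 k < fa c v2 k.
Proof.
by move=> k0 v12; rewrite /fa ltr_pM2r ?invr_gt0 // ltr_pM2r ?onemexpRN_gt0.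
Qed.

Lemma fa_gt_id_near0 (vbar : R) : c < vbar -> exists2 a, 0 < a & a < fa c vbar a.
Proof.
move=> cv; pose a := (vbar - c) / (2 * c).
have a0 : 0 < a by rewrite divr_gt0 ?mulr_gt0 // subr_gt0.
have ca : c * (1 + a) < vbar.
  have -> : c * (1 + a) = (c + vbar) / 2 by rewrite /a; field; rewrite gt_eqF.
  lra.
exists a => //.
rewrite /fa ltr_pdivlMr // [a * c]mulrC.
apply: lt_le_trans (_ : vbar * (a / (1 + a)) <= _); last first.
  apply: ler_wpM2l; last exact: onemexpRN_ge_ratio (ltW a0).
  exact: ltW (lt_trans c_gt0 cv).
by rewrite mulrA ltr_pdivlMr ?addr_gt0 // mulrAC ltr_pM2r.
Qed.

Lemma fa_fixed_point_gt (vbar a : R) : 0 <= vbar -> 0 <= a -> a < fa c vbar a ->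
  exists2 k, a < k & k = fa c vbar k.
Proof.
move=> v0 a0 afa; pose b := a + vbar / c + 1.
have ab : a <= b by rewrite /b; have := divr_ge0 v0 (ltW c_gt0); lra.
have fab : fa c vbar b - b < 0 by have := fa_le_ratio b v0; rewrite /b; lra.
have g_cont : {within `[a, b], continuous (fun x => fa c vbar x - x)}.
  by apply: continuous_subspaceT => x; apply: cvgB; [exact: fa_continuous | exact: cvg_id].
have [|k] := IVT ab g_cont (v := 0).
  by rewrite ge_min le_max; apply/andP; split; apply/orP; [right|left]; lra.
rewrite in_itv /= => /andP[ak _] fak.
exists k; last lra.
by rewrite lt_neqAle ak andbT; apply/eqP => ak'; rewrite -ak' in fak; lra.
Qed.

Lemma largest_fp_ge (vbar kappa k : R) : 0 <= vbar ->
  is_largest_fp c vbar kappa -> 0 <= k -> k <= fa c vbar k -> k <= kappa.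
Proof.
move=> v0 [_ _ kappa_max] k0; rewrite le_eqVlt => /orP[/eqP|] kfa.
  exact: kappa_max.
have [k' kk' k'fa] := fa_fixed_point_gt v0 k0 kfa.
by apply: le_trans (ltW kk') (kappa_max _ _ k'fa); lra.
Qed.

Lemma largest_fp_sub_fa (vbar kappa k : R) : 0 <= vbar ->
  is_largest_fp c vbar kappa -> 0 <= k <= kappa -> k <= fa c vbar k.
Proof.
move=> v0 [kappa0 kappa_fp _] /andP[k0 kk].
have [->|k_neq0] := eqVneq k 0.
  by rewrite /fa oppr0 expR0 subrr mulr0 mul0r.
have kappa_pos : 0 < kappa by apply: lt_le_trans kk; rewrite lt_neqAle eq_sym k_neq0.
have t01 : 0 <= k / kappa <= 1.
  by rewrite divr_ge0 // ler_pdivrMr // mul1r kk.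
have := fa_chord kappa v0 t01.
by rewrite -kappa_fp divfK // gt_eqF.
Qed.

Lemma largest_fp_increasing (v1 v2 k1 k2 : R) : c <= v1 -> v1 < v2 ->
  is_largest_fp c v1 k1 -> is_largest_fp c v2 k2 -> k1 < k2.
Proof.
move=> cv1 v12 k1fp k2fp; have v20 : 0 <= v2 by move: c_gt0; lra.
have [k10 k1_fp _] := k1fp.
have [a k1a afa] : exists2 a, k1 <= a & a < fa c v2 a.
  have [->|k1_neq0] := eqVneq k1 0.
    have [a a0 afa] : exists2 a, 0 < a & a < fa c v2 a.
      by apply: fa_gt_id_near0; move: c_gt0; lra.
    by exists a; first exact: ltW.
  exists k1 => //; rewrite [X in X < _]k1_fp fa_ltr_budget //.
  by rewrite lt_neqAle eq_sym k1_neq0.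
have a0 := le_trans k10 k1a.
have [k ak k_fp] := fa_fixed_point_gt v20 a0 afa.
apply: lt_le_trans (_ : k <= k2); first lra.
by apply: largest_fp_ge k2fp _ _ => //; [lra | rewrite -k_fp].
Qed.

End LargestFixedPoint.

Section FeasibleSchedules.
Variables (R : realType) (L : nat) (mu q : 'I_L -> R) (c : R).
Hypothesis c_gt0 : 0 < c.

Lemma Psi_inf_artificial (va k : R) :
  Psi_inf mu q c (fun=> 0) va 1 k = va * (1 - expR (- k)) / c.
Proof.
by rewrite /Psi_inf big1 ?add0r ?mul1r // => l _; rewrite !mul0r.
Qed.

Lemma largest_fp_sub_Kset (vbar kappa : R) : 0 <= vbar ->
  is_largest_fp c vbar kappa -> [set k | 0 <= k <= kappa] `<=` Kset mu q c vbar.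
Proof.
move=> v0 kfp k /= k0kappa; have /andP[k0 _] := k0kappa; split => //.
have kfa := largest_fp_sub_fa c_gt0 v0 kfp k0kappa.
have [->|k_neq0] := eqVneq k 0.
  exists (fun=> 0), 0, 1; split; rewrite ?lexx ?ler01 ?big1 ?add0r //.
  by rewrite Psi_inf_artificial !mul0r.
have gk : 0 < 1 - expR (- k) by rewrite onemexpRN_gt0 // lt_neqAle eq_sym k_neq0.
exists (fun=> 0), (c * k / (1 - expR (- k))), 1; split; rewrite ?lexx ?ler01 //.
- by apply: divr_ge0; [rewrite mulr_ge0 // ltW | exact: ltW].
- by rewrite big1_eq add0r ler_pdivrMr // [c * k]mulrC -ler_pdivlMr.
- by rewrite Psi_inf_artificial divfK ?gt_eqF // mulrC mulKf ?gt_eqF.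
Qed.

Hypotheses (mu01 : forall l, 0 <= mu l <= 1) (q01 : forall l, 0 <= q l <= 1).

Lemma Psi_inf_le_fa (v : 'I_L -> R) (va qa vbar k : R) :
  (forall l, 0 <= v l) -> 0 <= va -> 0 <= qa <= 1 ->
  \sum_(l < L) v l + va <= vbar -> 0 <= k ->
  Psi_inf mu q c v va qa k <= fa c vbar k.
Proof.
move=> v0 va0 /andP[qa0 qa1] budget k0.
pose g := 1 - expR (- k).
have g0 : 0 <= g by exact: onemexpRN_ge0.
have gx x : x <= 1 -> 1 - expR (- (x * k)) <= g.
  by move=> x1; apply: onemexpRN_le; rewrite ler_piMl.
have c1 : 0 <= c^-1 by rewrite invr_ge0 ltW.
apply: le_trans (_ : (\sum_(l < L) v l + va) * g / c <= _); last first.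
  by rewrite ler_wpM2r // ler_wpM2r.
rewrite /Psi_inf mulrDl mulrDl mulr_suml mulr_suml.
apply: lerD; last by rewrite ler_wpM2r // ler_wpM2l ?gx.
apply: ler_sum => l _; have /andP[m0 m1] := mu01 l; have /andP[ql0 ql1] := q01 l.
have gl0 : 0 <= 1 - expR (- (q l * k)) by rewrite onemexpRN_ge0 ?mulr_ge0.
rewrite ler_wpM2r // -mulrA ler_wpM2l //.
by apply: le_trans (gx _ ql1); rewrite ler_piMl.
Qed.

Lemma Kset_sub_largest_fp (vbar kappa : R) : 0 <= vbar ->
  is_largest_fp c vbar kappa -> Kset mu q c vbar `<=` [set k | 0 <= k <= kappa].
Proof.
move=> v0 kfp k [k0 [v [va [qa [v_ge0 va0 qa01 budget k_fp]]]]].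
rewrite /= k0 (largest_fp_ge c_gt0 v0 kfp k0) //.
by rewrite [X in X <= _]k_fp Psi_inf_le_fa.
Qed.

End FeasibleSchedules.

Theorem lemma6 (R : realType) (L : nat) (mu q : 'I_L -> R) (c : R)
  (kappa_a : R -> R) :
  (forall l, 0 < mu l <= 1) ->
  (forall l, 0 < q l <= 1) ->
  0 < c ->
  (forall vbar, c <= vbar -> is_largest_fp c vbar (kappa_a vbar)) ->
  (forall v1 v2, c <= v1 -> v1 < v2 -> kappa_a v1 < kappa_a v2) /\
  (forall vbar, c <= vbar ->
     Kset mu q c vbar = [set k | 0 <= k <= kappa_a vbar]).
Proof.
move=> mu01 q01 c_gt0 kappa_fp; split=> [v1 v2 cv1 v12 | vbar cv].
- have cv2 : c <= v2 := le_trans cv1 (ltW v12).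
  exact: (largest_fp_increasing c_gt0 cv1 v12 (kappa_fp _ cv1) (kappa_fp _ cv2)).
- have v0 : 0 <= vbar := le_trans (ltW c_gt0) cv.
  have mu01' l : 0 <= mu l <= 1 by have /andP[/ltW -> ->] := mu01 l.
  have q01' l : 0 <= q l <= 1 by have /andP[/ltW -> ->] := q01 l.
  apply/seteqP; split => k.
  + exact: (Kset_sub_largest_fp c_gt0 mu01' q01' v0 (kappa_fp _ cv)).
  + exact: (largest_fp_sub_Kset mu q c_gt0 v0 (kappa_fp _ cv)).
Qed.
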